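(* Let $b_1,\dots,b_m$ be background frames and $f$ a foreground frame, with a distance $d$ satisfying the triangle inequality and $d(b_j,b_{j+1})\le\delta$ for all $1\le j<m$. Suppose $b_i$ is a strong match for $f$, with $d(f,b_i)$ uniformly distributed on $[0,\Psi]$. Let the window size be $\gamma=\Psi/\delta$, assumed to be an integer with $1\le i-\gamma$ and $i+\gamma\le m$. Then the expected number of strong matches for $f$ in the entire window $b_{i-\gamma},\dots,b_{i+\gamma}$ (of size $2\gamma+1$) is at least $\gamma$.
   Context: A background frame $b$ is a strong match for a foreground frame $f$ if $d(f,b)\le\Psi$, where $\Psi>0$ is a fixed threshold. Randomized model: given that $\{f,b\}$ is a strong match, the distance $d(f,b)$ is modeled as a sample from the uniform distribution on $[0,\Psi]$. *)

From HB Require Import structures.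
From mathcomp Require Import all_boot all_order all_algebra.
From mathcomp Require Import all_classical all_reals all_analysis.
Set Implicit Arguments. Unset Strict Implicit. Unset Printing Implicit Defensive.
Import Order.TTheory GRing.Theory Num.Theory.
Local Open Scope ring_scope.

Definition strong_match (X : Type) (R : realType) (d : X -> X -> R) (Psi : R)
  (f b : X) : bool := d f b <= Psi.

Definition num_strong_matches (X : Type) (R : realType) (d : X -> X -> R)
  (Psi : R) (f : X) (b : nat -> X) (lo hi : nat) : nat :=
  count (fun j => strong_match d Psi f (b j)) (iota lo (hi.+1 - lo)).

(* If [b_i] is a strong match with slack [Psi - d(f, b_i)], then by the
   triangle inequality along the chain [b_i, b_(i+1), ...] every frame [b_j]
   with [|j - i| delta] below that slack is a strong match as well.  Since the
   slack is uniform on [0, Psi], this happens with probability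
   [1 - |j - i| / gamma], and summing these over the window gives
   [2 gamma + 1 - (gamma + 1) = gamma]. *)

From HB Require Import structures.
From mathcomp Require Import all_boot all_order all_algebra.
From mathcomp Require Import all_classical all_reals all_analysis.
From mathcomp Require Import measurable_realfun ring zify.
Set Implicit Arguments. Unset Strict Implicit. Unset Printing Implicit Defensive.
Import Order.TTheory GRing.Theory Num.Theory.
Local Open Scope ring_scope.
Local Open Scope classical_set_scope.

Lemma uniform_prob_itv0 (R : realType) (Psi : R) (Psi_gt0 : 0 < Psi) (c : R) :
  0 <= c -> c <= Psi -> uniform_prob Psi_gt0 `[0, c] = (c / Psi)%:E.
Proof.
move=> c_ge0 c_le; rewrite /uniform_prob integral_uniform_pdf setIidl; last first.
  by move=> x /=; rewrite !in_itv/= => /andP[-> /le_trans->].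
rewrite (eq_integral (fun=> (Psi - 0)^-1%:E)); last first.
  move=> x; rewrite inE/= in_itv/= /uniform_pdf => /andP[x_ge0 x_le].
  by rewrite x_ge0 (le_trans x_le c_le).
rewrite integral_cst//= lebesgue_measure_itv/= lte_fin.
have [c_gt0|] := ltP 0 c; first by rewrite -EFinD -EFinM !subr0 mulrC.
move=> c_le0; have -> : c = 0 by apply/le_anti; rewrite c_le0 c_ge0.
by rewrite mul0r mule0.
Qed.

Lemma expectation_count (R : realType) (dT : measure_display)
    (T : measurableType dT) (P : probability T R) (I : Type)
    (S : I -> set T) (s : seq I) :
  (forall j, measurable (S j)) ->
  ('E_P[fun w => (count (fun j => w \in S j) s)%:R] = \sum_(j <- s) P (S j))%E.
Proof.
move=> S_meas; rewrite unlock.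
transitivity (\int[P]_w (\sum_(j <- s) (\1_(S j) w)%:E))%E.
  apply: eq_integral => w _; rewrite sumEFin -sum1_count big_mkcond natr_sum.
  by congr EFin; apply: eq_bigr => j _; rewrite indicE; case: (w \in S j).
rewrite ge0_integral_sum //; last first.
  by move=> j; apply/measurable_EFinP; exact: measurable_indic.
by apply: eq_bigr => j _; rewrite integral_indic // setIT.
Qed.

Lemma sum_dist_to_mid (g : nat) :
  (\sum_(k < g.*2.+1) (g - k + (k - g)) = g * g.+1)%N.
Proof.
elim: g => [|g IH]; first by rewrite big_ord1.
rewrite doubleS big_ord_recl big_ord_recr /=.
rewrite (eq_bigr (fun k : 'I_g.*2.+1 => (g - k + (k - g))%N)); last first.
  by move=> k _; rewrite /bump /=; lia.
by rewrite IH /bump /=; lia.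
Qed.

Lemma sum_linear_decay (R : realFieldType) (g : nat) : (0 < g)%N ->
  \sum_(k < g.*2.+1) (1 - (g - k + (k - g))%:R / g%:R) = g%:R :> R.
Proof.
move=> g_gt0; rewrite sumrB sumr_const card_ord -mulr_suml -natr_sum.
rewrite sum_dist_to_mid -mul2n natrM mulrSr natrM -addn1 natrD.
by field; rewrite pnatr_eq0 -lt0n.
Qed.

Section chain_distance.
Variables (R : realType) (X : Type) (d : X -> X -> R).
Hypothesis d_sym : forall x y, d x y = d y x.
Hypothesis d_tri : forall x y z, d x z <= d x y + d y z.
Variables (delta : R) (m : nat) (b : nat -> X).
Hypothesis hstep : forall j, (1 <= j)%N -> (j < m)%N -> d (b j) (b j.+1) <= delta.

Lemma dist_chain_le a c : (1 <= a)%N -> (a < c)%N -> (c <= m)%N ->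
  d (b a) (b c) <= (c - a)%:R * delta.
Proof.
move=> a_ge1; elim: c => // c IH.
rewrite ltnS leq_eqVlt => /orP[/eqP <- | a_lt c_le].
  by rewrite subSnn mul1r => a_lt; apply: hstep.
apply: le_trans (d_tri _ (b c) _) _.
rewrite (subSn (ltnW a_lt)) -natr1 mulrDl mul1r.
apply: lerD; first exact/IH/ltnW.
by apply: hstep => //; exact: leq_trans a_ge1 (ltnW a_lt).
Qed.

Lemma dist_chain_shift x i j : (1 <= i <= m)%N -> (1 <= j <= m)%N ->
  d x (b j) <= d x (b i) + (i - j + (j - i))%:R * delta.
Proof.
move=> /andP[i_ge1 i_le] /andP[j_ge1 j_le].
have [i_lt|j_lt|->] := ltngtP i j; last by rewrite !subnn mul0r addr0.
- apply: le_trans (d_tri _ (b i) _) _.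
  by rewrite lerD2l (eqP (ltnW i_lt)) add0n; exact: dist_chain_le.
- apply: le_trans (d_tri _ (b i) _) _.
  by rewrite lerD2l d_sym (eqP (ltnW j_lt)) addn0; exact: dist_chain_le.
Qed.

End chain_distance.

Section window_strong_matches.
Variables (R : realType) (dT : measure_display) (T : measurableType dT).
Variable P : probability T R.
Variables (X : Type) (d : X -> X -> R).
Hypothesis d_sym : forall x y, d x y = d y x.
Hypothesis d_tri : forall x y z, d x z <= d x y + d y z.
Variables (Psi delta : R) (Psi_gt0 : 0 < Psi).
Hypothesis delta_gt0 : 0 < delta.
Variables (m i gamma : nat) (f : T -> X) (b : T -> nat -> X).
Hypothesis hgamma : Psi = gamma%:R * delta.
Hypothesis hstep : forall w j, (1 <= j)%N -> (j < m)%N -> d (b w j) (b w j.+1) <= delta.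
Hypothesis hmeas : forall j, measurable_fun setT (fun w => d (f w) (b w j)).
Hypothesis hunif : forall A : set R, measurable A ->
  P ((fun w => d (f w) (b w i)) @^-1` A) = uniform_prob Psi_gt0 A.

Lemma window_size_gt0 : (0 < gamma)%N.
Proof.
by rewrite lt0n; apply/eqP => gamma0; move: Psi_gt0; rewrite hgamma gamma0 mul0r ltxx.
Qed.

Lemma measurable_dist_preimage j (A : set R) : measurable A ->
  measurable ((fun w => d (f w) (b w j)) @^-1` A).
Proof. by move=> mA; rewrite -[_ @^-1` _]setTI; exact: hmeas. Qed.

Lemma strong_match_prob_ge j : (1 <= i <= m)%N -> (1 <= j <= m)%N ->
  (i - j + (j - i) <= gamma)%N ->
  ((1 - (i - j + (j - i))%:R / gamma%:R)%:E
    <= P ((fun w => d (f w) (b w j)) @^-1` `]-oo, Psi]))%E.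
Proof.
move=> i_in j_in n_le; set n := (i - j + (j - i))%N in n_le *.
set c := Psi - n%:R * delta.
have c_ge0 : 0 <= c.
  by rewrite /c hgamma -mulrBl mulr_ge0 ?subr_ge0 ?ler_nat // ltW.
have c_le : c <= Psi by rewrite /c lerBlDr lerDl mulr_ge0 // ltW.
have -> : 1 - n%:R / gamma%:R = c / Psi.
  rewrite /c hgamma; field.
  by rewrite pnatr_eq0 -lt0n window_size_gt0 (gt_eqF delta_gt0).
rewrite -uniform_prob_itv0 // -hunif //.
apply: le_measure; rewrite ?inE; try exact: measurable_dist_preimage.
move=> w /=; rewrite !in_itv /= => /andP[_ D_le].
apply: le_trans (dist_chain_shift d_sym d_tri (hstep w) (f w) i_in j_in) _.
by rewrite -lerBrDr.
Qed.

End window_strong_matches.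

Theorem theorem3p6
  (R : realType) (dT : measure_display) (T : measurableType dT)
  (P : probability T R)
  (X : Type) (d : X -> X -> R)
  (d_ge0 : forall x y, 0 <= d x y)
  (d_sym : forall x y, d x y = d y x)
  (d_tri : forall x y z, d x z <= d x y + d y z)
  (Psi delta : R) (Psi_gt0 : 0 < Psi) (delta_gt0 : 0 < delta)
  (m i gamma : nat)
  (f : T -> X) (b : T -> nat -> X)
  (hgamma : Psi = gamma%:R * delta)
  (hlo : (1 <= i - gamma)%N) (hhi : (i + gamma <= m)%N)
  (hstep : forall w j, (1 <= j)%N -> (j < m)%N -> d (b w j) (b w j.+1) <= delta)
  (hmeas : forall j, measurable_fun setT (fun w => d (f w) (b w j)))
  (hunif : forall A : set R, measurable A ->
     P ((fun w => d (f w) (b w i)) @^-1` A) = uniform_prob Psi_gt0 A) :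
  (gamma%:R%:E <=
   'E_P[fun w => (num_strong_matches d Psi (f w) (b w) (i - gamma) (i + gamma))%:R])%E.
Proof.
have gamma_lt_i : (gamma < i)%N by rewrite -subn_gt0.
have window_size : ((i + gamma).+1 - (i - gamma) = gamma.*2.+1)%N.
  by clear -gamma_lt_i; lia.
pose S j := (fun w => d (f w) (b w j)) @^-1` `]-oo, Psi].
have -> : (fun w => (num_strong_matches d Psi (f w) (b w) (i - gamma) (i + gamma))%:R)
    = (fun w => (count (fun j => w \in S j) (iota (i - gamma) gamma.*2.+1))%:R) :> (T -> R).
  apply: boolp.funext => w; rewrite /num_strong_matches window_size.
  congr (_%:R); apply: eq_count => j.
  by apply/idP/idP; rewrite inE /S /= in_itv.
rewrite expectation_count; last by move=> j; exact: (measurable_dist_preimage hmeas).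
rewrite -[(i - gamma)%N]addn0 iotaDl big_map.
have -> : iota 0 gamma.*2.+1 = index_iota 0 gamma.*2.+1 by rewrite /index_iota subn0.
rewrite big_mkord -(@sum_linear_decay R _ (window_size_gt0 Psi_gt0 hgamma)) -sumEFin.
apply: lee_sum => k _.
have -> : (gamma - k + (k - gamma) = i - (i - gamma + k) + (i - gamma + k - i))%N.
  by clear -gamma_lt_i; lia.
apply: (strong_match_prob_ge d_sym d_tri delta_gt0 hgamma hstep hmeas hunif);
  by have := ltn_ord k; clear -gamma_lt_i hhi; lia.
Qed.
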